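(* Let $H$ be a simple, co-hopfian, complete group, and let $G$ be a simple, complete group with $H\subsetneq G$ such that every proper subgroup of $G$ is either cyclic or contained in a conjugate $g^{-1}Hg$ ($g\in G$) of $H$. Then $G$ is co-hopfian and the inclusion $H\subseteq G$ is a localization.
   Context: A group homomorphism $i\colon H\to G$ is a localization if for every homomorphism $\varphi\colon H\to G$ there exists a unique homomorphism $\psi\colon G\to G$ with $\psi\circ i=\varphi$; for $H\subseteq G$, ''$H\subseteq G$ is a localization'' means the inclusion map is. A group is co-hopfian if every injective endomorphism is an automorphism; complete if it has trivial center and every automorphism is inner. *)

From Stdlib Require Import ZArith ProofIrrelevance.
Set Implicit Arguments.

Record group := Group {
  carrier :> Type;
  gop : carrier -> carrier -> carrier;
  gid : carrier;
  ginv : carrier -> carrier;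
  gassoc : forall x y z, gop x (gop y z) = gop (gop x y) z;
  gid_l : forall x, gop gid x = x;
  ginv_l : forall x, gop (ginv x) x = gid
}.
Arguments gop {g}. Arguments gid {g}. Arguments ginv {g}.

Definition hom {A B : group} (f : A -> B) : Prop :=
  forall x y, f (gop x y) = gop (f x) (f y).

Definition injective {A B : Type} (f : A -> B) := forall x y, f x = f y -> x = y.
Definition surjective {A B : Type} (f : A -> B) := forall y, exists x, f x = y.

Definition automorphism {A : group} (f : A -> A) : Prop :=
  hom f /\ injective f /\ surjective f.

Definition cohopfian (A : group) : Prop :=
  forall f : A -> A, hom f -> injective f -> automorphism f.

Definition trivial_center (A : group) : Prop :=
  forall z : A, (forall x : A, gop z x = gop x z) -> z = gid.

Definition inner {A : group} (f : A -> A) : Prop :=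
  exists g : A, forall x, f x = gop (ginv g) (gop x g).

Definition complete (A : group) : Prop :=
  trivial_center A /\ forall f : A -> A, automorphism f -> inner f.

Definition subgroup {A : group} (S : A -> Prop) : Prop :=
  S gid /\ (forall x y, S x -> S y -> S (gop x y)) /\ (forall x, S x -> S (ginv x)).

Definition normal {A : group} (N : A -> Prop) : Prop :=
  subgroup N /\ forall g x, N x -> N (gop (ginv g) (gop x g)).

Definition simple (A : group) : Prop :=
  (exists x : A, x <> gid) /\
  forall N : A -> Prop, normal N ->
    (forall x, N x -> x = gid) \/ (forall x, N x).

Fixpoint npow {A : group} (g : A) (n : nat) : A :=
  match n with O => gid | S k => gop g (npow g k) end.

Definition zpow {A : group} (g : A) (n : Z) : A :=
  match n with
  | Z0 => gid
  | Zpos p => npow g (Pos.to_nat p)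
  | Zneg p => ginv (npow g (Pos.to_nat p))
  end.

Definition cyclic {A : group} (S : A -> Prop) : Prop :=
  exists g : A, forall x, S x <-> exists n : Z, x = zpow g n.

Definition localization {A B : group} (i : A -> B) : Prop :=
  forall phi : A -> B, hom phi ->
    exists psi : B -> B, hom psi /\ (forall a, psi (i a) = phi a) /\
      forall psi' : B -> B, hom psi' -> (forall a, psi' (i a) = phi a) ->
        forall x, psi' x = psi x.

Section Sub.
Variables (A : group) (S : A -> Prop) (HS : subgroup S).

Definition sub_op (x y : {a : A | S a}) : {a : A | S a} :=
  exist _ (gop (proj1_sig x) (proj1_sig y))
    (proj1 (proj2 HS) _ _ (proj2_sig x) (proj2_sig y)).
Definition sub_id : {a : A | S a} := exist _ gid (proj1 HS).
Definition sub_inv (x : {a : A | S a}) : {a : A | S a} :=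
  exist _ (ginv (proj1_sig x)) (proj2 (proj2 HS) _ (proj2_sig x)).

Lemma sub_eq (x y : {a : A | S a}) : proj1_sig x = proj1_sig y -> x = y.
Proof.
  destruct x as [x hx], y as [y hy]; simpl; intros ->.
  f_equal; apply proof_irrelevance.
Qed.

Lemma sub_assoc x y z : sub_op x (sub_op y z) = sub_op (sub_op x y) z.
Proof. apply sub_eq; simpl; apply gassoc. Qed.
Lemma sub_id_l x : sub_op sub_id x = x.
Proof. apply sub_eq; simpl; apply gid_l. Qed.
Lemma sub_inv_l x : sub_op (sub_inv x) x = sub_id.
Proof. apply sub_eq; simpl; apply ginv_l. Qed.

Definition sub_group : group :=
  @Group {a : A | S a} sub_op sub_id sub_inv sub_assoc sub_id_l sub_inv_l.

Definition incl : sub_group -> A := fun x => proj1_sig x.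
End Sub.

From Stdlib Require Import Classical ClassicalEpsilon.

(** Every proper subgroup of G that is not abelian lies in a conjugate of H;
    since H is co-hopfian, an embedding of H into a conjugate of H is onto it.
    Hence H is a maximal subgroup and its centralizer is trivial.  An injective
    endomorphism f of G with proper image would put f(G) inside some H^g, so
    f(G) = f(H) and G = H.  So G is co-hopfian, every endomorphism fixing H is an
    inner automorphism by an element centralizing H, i.e. the identity.  For the
    localization: a nontrivial φ : H → G is injective and not onto, so φ(H) lies
    in some H^g; composing with conjugation by g^-1 gives an automorphism of H,
    which is inner, hence φ is the restriction of an inner automorphism c_a of G,
    and c_a is the only extension since c_a^-1 ∘ ψ fixes H. *)

Arguments gassoc {g} x y z.
Arguments gid_l {g} x.
Arguments ginv_l {g} x.

Section GroupFacts.
Context {A : group}.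
Implicit Types x y a b : A.

Lemma ginv_r x : gop x (ginv x) = gid.
Proof.
  rewrite <- (gid_l (gop x (ginv x))), <- (ginv_l (ginv x)) at 1.
  rewrite <- gassoc, (gassoc (ginv x) x (ginv x)), ginv_l, gid_l.
  apply ginv_l.
Qed.

Lemma gid_r x : gop x gid = x.
Proof. rewrite <- (ginv_l x), gassoc, ginv_r, gid_l. reflexivity. Qed.

Lemma gop_cancel_l a x y : gop a x = gop a y -> x = y.
Proof.
  intro E.
  rewrite <- (gid_l x), <- (gid_l y), <- (ginv_l a), <- !gassoc, E.
  reflexivity.
Qed.

Lemma ginv_unique a x : gop a x = gid -> a = ginv x.
Proof.
  intro E. rewrite <- (gid_r a), <- (ginv_r x), gassoc, E, gid_l. reflexivity.
Qed.

Lemma ginv_gop x y : ginv (gop x y) = gop (ginv y) (ginv x).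
Proof.
  symmetry. apply ginv_unique.
  rewrite <- gassoc, (gassoc (ginv x)), ginv_l, gid_l, ginv_l.
  reflexivity.
Qed.

Lemma ginv_gid : ginv (@gid A) = gid.
Proof. symmetry. apply ginv_unique, gid_l. Qed.

Lemma ginv_ginv x : ginv (ginv x) = x.
Proof. symmetry. apply ginv_unique, ginv_r. Qed.

Definition conjg x a : A := gop (ginv a) (gop x a).

Lemma conjg_hom a : hom (fun x => conjg x a).
Proof.
  intros x y. unfold conjg. rewrite <- !gassoc. f_equal.
  rewrite (gassoc a (ginv a)), ginv_r, gid_l, gassoc.
  reflexivity.
Qed.

Lemma conjg1 x : conjg x gid = x.
Proof. unfold conjg. rewrite ginv_gid, gid_l. apply gid_r. Qed.

Lemma conjgM x a b : conjg x (gop a b) = conjg (conjg x a) b.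
Proof. unfold conjg. rewrite ginv_gop, !gassoc. reflexivity. Qed.

Lemma conjgK x a : conjg (conjg x a) (ginv a) = x.
Proof. rewrite <- conjgM, ginv_r. apply conjg1. Qed.

Lemma conjgKV x a : conjg (conjg x (ginv a)) a = x.
Proof. rewrite <- conjgM, ginv_l. apply conjg1. Qed.

Lemma conjg_fixed_commute x a : conjg x a = x -> gop x a = gop a x.
Proof.
  intro E. rewrite <- E at 2. unfold conjg.
  rewrite gassoc, ginv_r, gid_l. reflexivity.
Qed.

Definition conjugate (H : A -> Prop) a x : Prop := exists h, H h /\ x = conjg h a.

Definition abelian_on (K : A -> Prop) : Prop :=
  forall x y, K x -> K y -> gop x y = gop y x.

Lemma abelian_on_sub {K K' : A -> Prop} :
  (forall x, K x -> K' x) -> abelian_on K' -> abelian_on K.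
Proof. intros sub ab x y Kx Ky. apply ab; apply sub; assumption. Qed.

Lemma nonabelian_of_trivial_center :
  trivial_center A -> (exists x : A, x <> gid) -> ~ abelian_on (fun _ => True).
Proof. intros tc [x nx] ab. apply nx, tc. intro y. apply ab; trivial. Qed.

Lemma commute_ginv y c : gop y c = gop c y -> gop (ginv y) c = gop c (ginv y).
Proof.
  intro E.
  rewrite <- (gid_r (gop (ginv y) c)), <- (ginv_r y), !gassoc.
  rewrite <- (gassoc (ginv y) c y), <- E, gassoc, ginv_l, gid_l.
  reflexivity.
Qed.

Lemma commute_npow y c n : gop y c = gop c y -> gop y (npow c n) = gop (npow c n) y.
Proof.
  intro E. induction n as [|n IH]; simpl.
  - rewrite gid_l. apply gid_r.
  - rewrite gassoc, E, <- gassoc, IH, gassoc. reflexivity.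
Qed.

Lemma commute_zpow y c n : gop y c = gop c y -> gop y (zpow c n) = gop (zpow c n) y.
Proof.
  intro E. destruct n; simpl.
  - rewrite gid_l. apply gid_r.
  - apply commute_npow, E.
  - symmetry. apply commute_ginv. symmetry. apply commute_npow, E.
Qed.

Lemma cyclic_abelian (K : A -> Prop) : cyclic K -> abelian_on K.
Proof.
  intros [c Hc] x y Kx Ky.
  apply Hc in Kx as [m ->]. apply Hc in Ky as [n ->].
  apply commute_zpow. symmetry. apply commute_zpow. reflexivity.
Qed.

Lemma centralizer_subgroup b : subgroup (fun y => gop y b = gop b y).
Proof.
  split; [|split].
  - rewrite gid_l, gid_r. reflexivity.
  - intros x y Ex Ey. rewrite <- gassoc, Ey, gassoc, Ex, gassoc. reflexivity.
  - intros x Ex. apply commute_ginv, Ex.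
Qed.
End GroupFacts.

Lemma hom_comp {A B C : group} {f : A -> B} {g : B -> C} :
  hom f -> hom g -> hom (fun x => g (f x)).
Proof. intros hf hg x y. rewrite hf. apply hg. Qed.

Lemma injective_comp {A B C : Type} {f : A -> B} {g : B -> C} :
  injective f -> injective g -> injective (fun x => g (f x)).
Proof. intros if_ ig x y E. apply if_, ig, E. Qed.

Section Homomorphisms.
Context {A B : group} {f : A -> B}.
Hypothesis hf : hom f.

Lemma hom_gid : f gid = gid.
Proof. apply (gop_cancel_l (f gid)). rewrite <- hf, gid_l, gid_r. reflexivity. Qed.

Lemma hom_ginv x : f (ginv x) = ginv (f x).
Proof. apply ginv_unique. rewrite <- hf, ginv_l. apply hom_gid. Qed.

Lemma hom_injective_of_ker : (forall x, f x = gid -> x = gid) -> injective f.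
Proof.
  intros ker x y E.
  assert (D : gop x (ginv y) = gid).
  { apply ker. rewrite hf, hom_ginv, E. apply ginv_r. }
  apply ginv_unique in D. rewrite D. apply ginv_ginv.
Qed.

Lemma ker_normal : normal (fun x => f x = gid).
Proof.
  split; [split; [|split]|].
  - apply hom_gid.
  - intros x y Ex Ey. rewrite hf, Ex, Ey. apply gid_l.
  - intros x Ex. rewrite hom_ginv, Ex. apply ginv_gid.
  - intros g x Ex. rewrite !hf, Ex, gid_l, hom_ginv. apply ginv_l.
Qed.

Lemma simple_hom_trivial_or_injective : simple A -> (forall x, f x = gid) \/ injective f.
Proof.
  intros [_ sA]. destruct (sA _ ker_normal) as [ker | triv].
  - right. apply hom_injective_of_ker, ker.
  - left. exact triv.
Qed.

Lemma image_subgroup : subgroup (fun y => exists x, f x = y).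
Proof.
  split; [|split].
  - exists gid. apply hom_gid.
  - intros ? ? [a <-] [b <-]. exists (gop a b). apply hf.
  - intros ? [a <-]. exists (ginv a). apply hom_ginv.
Qed.

Lemma injective_image_nonabelian :
  injective f -> ~ abelian_on (fun _ : A => True) ->
  ~ abelian_on (fun y => exists x, f x = y).
Proof.
  intros inj nab ab. apply nab. intros x y _ _. apply inj.
  rewrite !hf. apply ab; eexists; reflexivity.
Qed.
End Homomorphisms.

Section Subgroup.
Context {A : group} {H : A -> Prop} (HH : subgroup H).

Lemma incl_hom : hom (@incl _ _ HH).
Proof. intros x y. reflexivity. Qed.

Lemma incl_injective : injective (@incl _ _ HH).
Proof. intros x y. apply sub_eq. Qed.

Lemma simple_sub_group_nontrivial : simple (sub_group HH) -> exists h, H h /\ h <> gid.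
Proof.
  intros [[x nx] _]. exists (proj1_sig x). split; [apply proj2_sig|].
  intro E. apply nx, sub_eq, E.
Qed.

Lemma abelian_on_sub_group : abelian_on H -> abelian_on (fun _ : sub_group HH => True).
Proof. intros ab x y _ _. apply sub_eq, ab; apply proj2_sig. Qed.

Lemma sub_group_centralizer_trivial :
  trivial_center (sub_group HH) ->
  forall b, H b -> (forall h, H h -> gop h b = gop b h) -> b = gid.
Proof.
  intros tc b Hb cb.
  refine (f_equal (@proj1_sig _ _) (tc (exist _ b Hb) _)).
  intro z. apply sub_eq. symmetry. apply cb, proj2_sig.
Qed.

Lemma conjugate_corestriction g {f : sub_group HH -> A} :
  hom f -> injective f -> (forall x, conjugate H g (f x)) ->
  exists j : sub_group HH -> sub_group HH,
    hom j /\ injective j /\ forall x, @incl _ _ HH (j x) = conjg (f x) (ginv g).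
Proof.
  intros hf inj into.
  assert (mem : forall x, H (conjg (f x) (ginv g))).
  { intro x. destruct (into x) as [h [Hh ->]]. rewrite conjgK. exact Hh. }
  exists (fun x => exist _ _ (mem x)). split; [|split].
  - intros x y. apply sub_eq. cbn.
    change (f (sub_op HH x y)) with (f (gop x y)). rewrite hf. apply conjg_hom.
  - intros x y E. apply inj.
    apply (f_equal (fun z => conjg (proj1_sig z) g)) in E. cbn in E.
    rewrite !conjgKV in E. exact E.
  - reflexivity.
Qed.

Hypothesis cH : cohopfian (sub_group HH).

Lemma embedding_into_conjugate_onto g {f : sub_group HH -> A} :
  hom f -> injective f -> (forall x, conjugate H g (f x)) ->
  forall y, conjugate H g y -> exists x, f x = y.
Proof.
  intros hf inj into y [h [Hh ->]].
  destruct (conjugate_corestriction g hf inj into) as [j [hj [ij ej]]].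
  destruct (cH j hj ij) as [_ [_ onto]].
  destruct (onto (exist _ h Hh)) as [x Ex].
  exists x. rewrite <- (conjgKV (f x) g), <- ej, Ex. reflexivity.
Qed.
End Subgroup.

Arguments simple_sub_group_nontrivial {A H HH}.
Arguments abelian_on_sub_group {A H HH}.
Arguments sub_group_centralizer_trivial {A H HH}.
Arguments conjugate_corestriction {A H HH} g {f}.
Arguments embedding_into_conjugate_onto {A H HH} cH g {f}.

Section Theorem5p4.
Variables (G : group) (H : G -> Prop) (HH : subgroup H).
Hypotheses (sH : simple (sub_group HH)) (cH : cohopfian (sub_group HH))
  (compH : complete (sub_group HH)) (sG : simple G) (compG : complete G)
  (H_proper : exists g : G, ~ H g)
  (proper_subgroups : forall K : G -> Prop, subgroup K -> (exists g : G, ~ K g) ->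
     cyclic K \/
     exists g : G, forall x, K x -> exists h, H h /\ x = gop (ginv g) (gop h g)).

Lemma sub_group_nonabelian : ~ abelian_on (fun _ : sub_group HH => True).
Proof.
  apply nonabelian_of_trivial_center; [apply compH | apply sH].
Qed.

Lemma H_nonabelian : ~ abelian_on H.
Proof. intro ab. apply sub_group_nonabelian, abelian_on_sub_group, ab. Qed.

Lemma G_nonabelian : ~ abelian_on (fun _ : G => True).
Proof. apply nonabelian_of_trivial_center; [apply compG | apply sG]. Qed.

Lemma nonabelian_proper_in_conjugate {K : G -> Prop} :
  subgroup K -> (exists g, ~ K g) -> ~ abelian_on K ->
  exists g, forall x, K x -> conjugate H g x.
Proof.
  intros sK pK nab. destruct (proper_subgroups _ sK pK) as [cK | inK].
  - exfalso. apply nab, cyclic_abelian, cK.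
  - exact inK.
Qed.

Lemma cohopfian_G : cohopfian G.
Proof.
  intros f hf inj. split; [exact hf | split; [exact inj |]].
  intro y. apply NNPP; intro ny.
  destruct (nonabelian_proper_in_conjugate (image_subgroup hf) (ex_intro _ y ny)
              (injective_image_nonabelian hf inj G_nonabelian)) as [g inK].
  destruct H_proper as [g0 ng0].
  destruct (embedding_into_conjugate_onto cH g
              (hom_comp (incl_hom HH) hf) (injective_comp (incl_injective HH) inj)
              (fun h => inK _ (ex_intro _ _ eq_refl))
              (f g0) (inK _ (ex_intro _ g0 eq_refl))) as [h Eh].
  apply ng0. rewrite <- (inj _ _ Eh). exact (proj2_sig h).
Qed.

Lemma H_maximal {K : G -> Prop} :
  subgroup K -> (exists g, ~ K g) -> (forall h, H h -> K h) -> forall x, K x -> H x.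
Proof.
  intros sK pK HK x Kx.
  destruct (nonabelian_proper_in_conjugate sK pK
              (fun ab => H_nonabelian (abelian_on_sub HK ab))) as [g inK].
  destruct (embedding_into_conjugate_onto cH g (incl_hom HH) (incl_injective HH)
              (fun h => inK _ (HK _ (proj2_sig h))) x (inK x Kx)) as [h <-].
  exact (proj2_sig h).
Qed.

Lemma centralizer_of_H_trivial b : (forall h, H h -> gop h b = gop b h) -> b = gid.
Proof.
  intro cb.
  destruct (classic (forall x, gop b x = gop x b)) as [central | noncentral].
  - exact (proj1 compG b central).
  - apply not_all_ex_not in noncentral as [g ng].
    assert (Hb : H b).
    { apply (H_maximal (centralizer_subgroup b)); [| exact cb | reflexivity].
      exists g. intro E. apply ng. symmetry. exact E. }
    exact (sub_group_centralizer_trivial (proj1 compH) b Hb cb).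
Qed.

Lemma H_nontrivial : exists h, H h /\ h <> gid.
Proof. exact (simple_sub_group_nontrivial sH). Qed.

Lemma hom_trivial_on_H_trivial {psi : G -> G} :
  hom psi -> (forall h, H h -> psi h = gid) -> forall y, psi y = gid.
Proof.
  intros hp kill.
  destruct (simple_hom_trivial_or_injective hp sG) as [triv | inj]; [exact triv |].
  exfalso. destruct H_nontrivial as [h [Hh nh]].
  apply nh, inj. rewrite (hom_gid hp). apply kill, Hh.
Qed.

Lemma hom_fixing_H_id {chi : G -> G} :
  hom chi -> (forall h, H h -> chi h = h) -> forall y, chi y = y.
Proof.
  intros hc fixH.
  destruct (simple_hom_trivial_or_injective hc sG) as [triv | inj].
  - exfalso. destruct H_nontrivial as [h [Hh nh]].
    apply nh. rewrite <- (fixH h Hh). apply triv.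
  - destruct (proj2 compG chi (cohopfian_G chi hc inj)) as [b Eb].
    assert (b1 : b = gid).
    { apply centralizer_of_H_trivial. intros h Hh.
      apply conjg_fixed_commute. unfold conjg. rewrite <- Eb. apply fixH, Hh. }
    intro y. rewrite Eb, b1. apply (conjg1 y).
Qed.

Lemma hom_from_H_not_surjective {phi : sub_group HH -> G} :
  hom phi -> injective phi -> ~ surjective phi.
Proof.
  intros hphi inj onto.
  set (phi_inv := fun y => proj1_sig (constructive_indefinite_description _ (onto y))).
  assert (phi_invK : forall y, phi (phi_inv y) = y).
  { intro y. exact (proj2_sig (constructive_indefinite_description _ (onto y))). }
  assert (hinv : hom (fun y => @incl _ _ HH (phi_inv y))).
  { intros x y. change (gop (@incl _ _ HH (phi_inv x)) (@incl _ _ HH (phi_inv y)))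
      with (@incl _ _ HH (gop (phi_inv x) (phi_inv y))).
    apply (f_equal (@incl _ _ HH)), inj.
    rewrite hphi, !phi_invK. reflexivity. }
  assert (iinv : injective (fun y => @incl _ _ HH (phi_inv y))).
  { intros x y E. apply incl_injective in E.
    rewrite <- (phi_invK x), <- (phi_invK y), E. reflexivity. }
  destruct (cohopfian_G _ hinv iinv) as [_ [_ onto']].
  destruct H_proper as [g0 ng0]. destruct (onto' g0) as [x <-].
  apply ng0, proj2_sig.
Qed.

Lemma hom_from_H_trivial_or_conjugation {phi : sub_group HH -> G} :
  hom phi ->
  (forall x, phi x = gid) \/ exists a, forall x, phi x = conjg (@incl _ _ HH x) a.
Proof.
  intro hphi.
  destruct (simple_hom_trivial_or_injective hphi sH) as [triv | inj]; [left; exact triv | right].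
  destruct (not_all_ex_not _ _ (hom_from_H_not_surjective hphi inj)) as [y ny].
  destruct (nonabelian_proper_in_conjugate (image_subgroup hphi) (ex_intro _ y ny)
              (injective_image_nonabelian hphi inj sub_group_nonabelian)) as [g inK].
  destruct (conjugate_corestriction g hphi inj (fun x => inK _ (ex_intro _ x eq_refl)))
    as [j [hj [ij ej]]].
  destruct (proj2 compH j (cH j hj ij)) as [k Ek].
  exists (gop (proj1_sig k) g). intro x.
  rewrite conjgM, <- (conjgKV (phi x) g), <- ej, Ek. reflexivity.
Qed.

Lemma localization_incl : localization (@incl G H HH).
Proof.
  intros phi hphi.
  destruct (hom_from_H_trivial_or_conjugation hphi) as [triv | [a Ea]].
  - exists (fun _ => gid). split; [| split].
    + intros x y. symmetry. apply gid_l.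
    + intro x. symmetry. apply triv.
    + intros psi hpsi ext. apply (hom_trivial_on_H_trivial hpsi).
      intros h Hh. rewrite <- (triv (exist _ h Hh)). apply (ext (exist _ h Hh)).
  - exists (fun y => conjg y a).
    split; [apply conjg_hom | split; [intro x; symmetry; apply Ea |]].
    intros psi hpsi ext y.
    assert (fixH : forall h, H h -> conjg (psi h) (ginv a) = h).
    { intros h Hh. pose proof (ext (exist _ h Hh)) as E. cbn in E.
      rewrite E, Ea. apply conjgK. }
    rewrite <- (conjgKV (psi y) a).
    rewrite (hom_fixing_H_id (hom_comp hpsi (conjg_hom (ginv a))) fixH y).
    reflexivity.
Qed.
End Theorem5p4.

Theorem theorem5p4 (G : group) (H : G -> Prop) (HH : subgroup H) :
  simple (sub_group HH) -> cohopfian (sub_group HH) -> complete (sub_group HH) ->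
  simple G -> complete G ->
  (exists g : G, ~ H g) ->
  (forall K : G -> Prop, subgroup K -> (exists g : G, ~ K g) ->
     cyclic K \/
     exists g : G, forall x, K x -> exists h, H h /\ x = gop (ginv g) (gop h g)) ->
  cohopfian G /\ localization (@incl G H HH).
Proof.
  intros. split; [eapply cohopfian_G | eapply localization_incl]; eassumption.
Qed.
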